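(* Let $f:\mathbb{R}^n_{>0}\to\mathbb{R}^n_{>0}$ be order-preserving and homogeneous, and let $J\subseteq[n]$. The following are equivalent: (a) there is no nonempty $A\subseteq J$ such that $[n]\setminus A$ is invariant in $\mathcal{H}^-_0(f)$; (b) $\operatorname{reach}([n]\setminus J,\mathcal{H}^-_0(f))=[n]$; (c) $r(f^J_0)=0$. Similarly, the following are equivalent: (d) there is no nonempty $B\subseteq[n]\setminus J$ such that $[n]\setminus B$ is invariant in $\mathcal{H}^+_\infty(f)$; (e) $\operatorname{reach}(J,\mathcal{H}^+_\infty(f))=[n]$; (f) $\lambda(f^{[n]\setminus J}_\infty)=\infty$.
   Context: $[n]=\{1,\dots,n\}$; entrywise order. Order-preserving: $x\le y\Rightarrow f(x)\le f(y)$; homogeneous: $f(tx)=tf(x)$ for $t>0$. $f$ extends continuously to order-preserving homogeneous maps on $\mathbb{R}^n_{\ge0}$ and $(0,\infty]^n$, again denoted $f$. $P^J_\alpha(x)_j=x_j$ for $j\in J$, $\alpha$ otherwise; $f^J_0=P^J_0fP^J_0$, $f^J_\infty=P^J_\infty fP^J_\infty$; $r(g)=\inf_{x\in\mathbb{R}^n_{>0}}\max_ig(x)_i/x_i$, $\lambda(g)=\sup_{x\in\mathbb{R}^n_{>0}}\min_ig(x)_i/x_i$. For $I\subseteq[n]$, $e_I$ is the indicator vector of $I$, $\exp$ is entrywise. $\mathcal{H}^-_0(f)$ and $\mathcal{H}^+_\infty(f)$ are directed hypergraphs on nodes $[n]$ whose hyperarcs are the pairs $(I,\{j\})$ with $I\subseteq[n]$,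 $j\notin I$, and respectively $\lim_{t\to\infty}f(\exp(-te_I))_j=0$, resp. $\lim_{t\to\infty}f(\exp(te_I))_j=\infty$. A set $I\subseteq[n]$ is invariant in a hypergraph if there is no hyperarc $(I',\{j\})$ with $I'\subseteq I$ and $j\notin I$. $\operatorname{reach}(J,\mathcal{H})$ is the smallest invariant set containing $J$. *)

From HB Require Import structures.
From mathcomp Require Import all_boot all_order all_algebra.
From mathcomp Require Import all_classical all_reals all_analysis.
Set Implicit Arguments. Unset Strict Implicit. Unset Printing Implicit Defensive.
Import Order.TTheory GRing.Theory Num.Theory.
Import numFieldNormedType.Exports.
Local Open Scope classical_set_scope.
Local Open Scope ring_scope.

Section Defs.
Variables (R : realType) (n : nat).
Notation vec := ('I_n -> R).

Definition posv : set vec := [set x | forall i, 0 < x i].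

Definition maps_pos (f : vec -> vec) : Prop :=
  forall x, posv x -> posv (f x).

Definition order_preserving (f : vec -> vec) : Prop :=
  forall x y, posv x -> posv y -> (forall i, x i <= y i) -> forall i, f x i <= f y i.

Definition homogeneous (f : vec -> vec) : Prop :=
  forall (t : R) x, 0 < t -> posv x -> f (fun i => t * x i) = (fun i => t * f x i).

(* continuous extension of f to R^n_{>=0}: f(x) = inf_{y > x} f(y) *)
Definition ext0 (f : vec -> vec) (x : vec) : vec :=
  fun i => inf [set f y i | y in [set y : vec | forall k, x k < y k]].

(* continuous extension of f to (0,oo]^n: f(x) = sup_{0 < y < x} f(y) *)
Definition extoo (f : vec -> vec) (x : 'I_n -> \bar R) : 'I_n -> \bar R :=
  fun i => ereal_sup [set (f y i)%:E |
                      y in [set y : vec | posv y /\ forall k, ((y k)%:E < x k)%E]].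

Definition P0 (J : {set 'I_n}) (x : vec) : vec :=
  fun j => if j \in J then x j else 0.
Definition Poo (J : {set 'I_n}) (x : 'I_n -> \bar R) : 'I_n -> \bar R :=
  fun j => if j \in J then x j else +oo%E.

Definition fJ0 (J : {set 'I_n}) (f : vec -> vec) : vec -> vec :=
  fun x => P0 J (ext0 f (P0 J x)).
Definition fJoo (J : {set 'I_n}) (f : vec -> vec) : vec -> 'I_n -> \bar R :=
  fun x => Poo J (extoo f (Poo J (fun j => (x j)%:E))).

Definition spec_r (g : vec -> vec) : R :=
  inf [set \big[Num.max/0]_(i < n) (g x i / x i) | x in posv].
Definition spec_lambda (g : vec -> 'I_n -> \bar R) : \bar R :=
  ereal_sup [set \big[Order.min/+oo%E]_(i < n) (g x i * ((x i)^-1)%:E)%E | x in posv].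

Definition expv (s : R) (I : {set 'I_n}) : vec :=
  fun k => expR (s * (k \in I)%:R).

(* hyperarcs (I,{j}) of H^-_0(f) and H^+_oo(f) *)
Definition H0 (f : vec -> vec) (I : {set 'I_n}) (j : 'I_n) : Prop :=
  j \notin I /\ (f (expv (- t) I) j @[t --> +oo] --> 0%R).
Definition Hoo (f : vec -> vec) (I : {set 'I_n}) (j : 'I_n) : Prop :=
  j \notin I /\ (f (expv t I) j @[t --> +oo] --> +oo).

Definition hg_invariant (E : {set 'I_n} -> 'I_n -> Prop) (S : {set 'I_n}) : Prop :=
  forall I j, E I j -> I \subset S -> j \in S.

Definition reach (J : {set 'I_n}) (E : {set 'I_n} -> 'I_n -> Prop) : {set 'I_n} :=
  [set x | `[< forall S, hg_invariant E S -> J \subset S -> x \in S >]].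

End Defs.

From HB Require Import structures.
From mathcomp Require Import all_boot all_order all_algebra.
From mathcomp Require Import all_classical all_reals all_analysis.
From mathcomp Require Import lra.
(* Re-imported so that the finset names (set0, setCK, subsetP, ...) shadow those
   of classical_sets. *)
From mathcomp Require Import fintype finset.
Import Order.TTheory GRing.Theory Num.Theory.
Local Open Scope ring_scope.
Set Implicit Arguments. Unset Strict Implicit.

(* Equivalence of the first two conditions is hypergraph combinatorics: the
   complement of reach(K) is the largest set disjoint from K whose complement is
   invariant.  For r(f^J_0) = 0, follow reach([n]\J) one hyperarc (I,{j}) of
   H^-_0(f) at a time, keeping some x in (0,1]^n with f(x)_i <= eps x_i outside
   the reached set K: scaling x by e^{-t} on K puts it below exp(-t e_I), which
   makes f(x)_j small for large t, and by monotonicity the inequalities already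
   obtained survive.  Conversely, if A is nonempty, contained in J, with [n]\A
   invariant, then for a in A the nonincreasing function
   t |-> f(exp(-t e_{[n]\A}))_a does not tend to 0, so it stays above some
   c > 0; by homogeneity f^J_0(x)_a >= c x_a at the a in A where x is smallest
   on A, whence r(f^J_0) >= c.  The statements about H^+_oo(f) and lambda are
   the mirror image, with e^t in place of e^{-t}. *)

Section Reach.
Variables (n : nat) (E : {set 'I_n} -> 'I_n -> Prop).

Lemma sub_reach (K : {set 'I_n}) : K \subset reach K E.
Proof. by apply/subsetP => x xK; rewrite inE; apply/asboolP => S _ /subsetP; apply. Qed.

Lemma reach_min (K S : {set 'I_n}) : hg_invariant E S -> K \subset S -> reach K E \subset S.
Proof. by move=> Sinv KS; apply/subsetP => x; rewrite inE => /asboolP; apply. Qed.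

Lemma reach_invariant (K : {set 'I_n}) : hg_invariant E (reach K E).
Proof.
move=> I j EIj IK; rewrite inE; apply/asboolP => S Sinv KS.
apply: (Sinv _ _ EIj); exact: subset_trans IK (reach_min Sinv KS).
Qed.

Lemma reachTP (K : {set 'I_n}) :
  reach K E = [set: 'I_n] <->
  ~ (exists A : {set 'I_n}, [/\ A != set0, A \subset ~: K & hg_invariant E (~: A)]).
Proof.
split=> [reachT [A [A0 AK Ainv]] | noA].
  have : reach K E \subset ~: A by apply: reach_min; rewrite // -setCS setCK.
  by rewrite reachT subTset -(inj_eq (@setC_inj _)) setCK setCT (negbTE A0).
apply/eqP; apply: contra_notT noA => reachNT.
exists (~: reach K E); split; last by rewrite setCK; exact: reach_invariant.
- by rewrite -[set0]setCT (inj_eq (@setC_inj _)).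
- by rewrite setCS sub_reach.
Qed.

Lemma reachT_ind (P : {set 'I_n} -> Prop) :
  P [set: 'I_n] ->
  (forall (K I : {set 'I_n}) j, E I j -> I \subset K -> j \notin K -> P (j |: K) -> P K) ->
  forall K : {set 'I_n}, reach K E = [set: 'I_n] -> P K.
Proof.
move=> PT Pstep K; move: {2}#|~: K| (leqnn #|~: K|) => m; elim: m K => [|m IHm] K.
  by rewrite leqn0 cards_eq0 -[set0]setCT (inj_eq (@setC_inj _)) => /eqP ->.
move=> Km reachT; have [->|KnT] := eqVneq K setT; first exact: PT.
have [I [j [EIj IK jK]]] : exists I j, [/\ E I j, I \subset K & j \notin K].
  apply: contra_neqP KnT => noarc; apply/eqP; rewrite eqEsubset subsetT -reachT.
  apply: reach_min => // I j EIj IK; apply: contra_notT noarc => jK; by exists I, j.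
apply: (Pstep _ _ _ EIj IK jK); apply: IHm.
  rewrite -ltnS (leq_trans _ Km) // proper_card //; apply/properP.
  by split; [rewrite setCS subsetUr | exists j; rewrite !inE ?eqxx].
have : reach K E \subset reach (j |: K) E.
  apply: reach_min; first exact: reach_invariant.
  exact: subset_trans (subsetUr _ _) (sub_reach _).
by rewrite reachT subTset => /eqP.
Qed.

End Reach.

Section MonotoneLimits.
Variable R : realType.
Local Open Scope classical_set_scope.

Lemma near_pinfty_ge0 (P : R -> Prop) :
  (\forall t \near +oo, P t) -> exists t, 0 <= t /\ P t.
Proof.
move=> Pnear; have /filter_ex[t tP] : \forall t \near +oo, 0 <= t /\ P t.
  by near=> t; split; [near: t; exact: nbhs_pinfty_ge | near: t].
by exists t.
Unshelve. all: end_near.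
Qed.

Lemma nonincreasing_pos_lbound (g : R -> R) :
  {homo g : s t / s <= t >-> t <= s} -> (forall t, 0 <= g t) ->
  ~ (g t @[t --> +oo] --> 0) -> exists2 c, 0 < c & forall t, c <= g t.
Proof.
move=> gdecr g_ge0 gNcvg; apply: contra_notP gNcvg => noc.
apply/cvgrPdist_le => e e0.
have /existsNP [t0 /negP] : ~ (forall t, e <= g t) by move=> ge; apply: noc; exists e.
rewrite -ltNge => gt0e.
near=> t; rewrite sub0r normrN ger0_norm // ltW // (le_lt_trans _ gt0e) // gdecr //.
Unshelve. all: end_near.
Qed.

Lemma nondecreasing_ubound (g : R -> R) :
  {homo g : s t / s <= t} -> ~ (g t @[t --> +oo] --> +oo) -> exists C, forall t, g t <= C.
Proof.
move=> gincr gNcvg; apply: contra_notP gNcvg => noC.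
apply/cvgryPge => A.
have /existsNP [t0 /negP] : ~ (forall t, g t <= A) by move=> le; apply: noC; exists A.
rewrite -ltNge => Agt0.
near=> t; rewrite ltW // (lt_le_trans Agt0) // gincr //.
Unshelve. all: end_near.
Qed.

End MonotoneLimits.

Section PositiveVectors.
Variables (R : realType) (n : nat).
Local Notation vec := ('I_n -> R).
Local Open Scope classical_set_scope.

Lemma expvE s (I : {set 'I_n}) k : expv s I k = if k \in I then expR s else 1 :> R.
Proof. by rewrite /expv; case: (k \in I); rewrite ?mulr1 ?mulr0 ?expR0. Qed.

Lemma expv_pos s (I : {set 'I_n}) : posv (expv s I : vec).
Proof. by move=> k; exact: expR_gt0. Qed.

Lemma expv_le s t (I : {set 'I_n}) k : s <= t -> expv s I k <= expv t I k :> R.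
Proof. by move=> st; rewrite !expvE; case: ifP; rewrite ?ler_expR. Qed.

Lemma posv1 : posv (fun _ : 'I_n => 1 : R).
Proof. by move=> k; exact: ltr01. Qed.

Lemma spec_r_eq0 (g : vec -> vec) :
  (forall eps, 0 < eps -> exists2 x, posv x & forall i, g x i <= eps * x i) ->
  spec_r g = 0.
Proof.
move=> g_small; rewrite /spec_r; set S := [set _ | x in _].
have S_ge0 : lbound S 0 by move=> _ [x _ <-]; exact: bigmax_ge_id.
have S_lb : has_lbound S by exists 0.
apply/eqP; rewrite eq_le lb_le_inf ?andbT //; last first.
  by eexists; exists (fun=> 1); first exact: posv1.
apply/ler_addgt0Pr => e e0; rewrite add0r; have [x xpos xsmall] := g_small e e0.
apply: le_trans (ge_inf S_lb _) _; first by exists x.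
by apply/bigmax_leP; split=> [|i _]; [exact: ltW | rewrite ler_pdivrMr].
Qed.

Lemma spec_r_ge (g : vec -> vec) c :
  (forall x, posv x -> exists i, c <= g x i / x i) -> c <= spec_r g.
Proof.
move=> g_ge; apply: lb_le_inf; first by eexists; exists (fun=> 1); first exact: posv1.
by move=> _ [x xpos <-]; have [i /le_trans] := g_ge x xpos; apply; exact: le_bigmax.
Qed.

Lemma spec_lambda_eqy (g : vec -> 'I_n -> \bar R) :
  (forall M, 0 < M -> exists2 x, posv x & forall i, (M%:E <= g x i * ((x i)^-1)%:E)%E) ->
  spec_lambda g = +oo%E.
Proof.
move=> g_large; apply/eqyP => M M0; have [x xpos xlarge] := g_large M M0.
apply: le_trans (ereal_sup_ubound _); last by exists x.
by apply/bigmin_geP; split=> [|i _]; [exact: leey | exact: xlarge].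
Qed.

Lemma spec_lambda_le (g : vec -> 'I_n -> \bar R) C :
  (forall x, posv x -> exists i, (g x i * ((x i)^-1)%:E <= C%:E)%E) ->
  (spec_lambda g <= C%:E)%E.
Proof.
move=> g_le; apply: ge_ereal_sup => _ [x xpos <-].
by have [i] := g_le x xpos; apply: le_trans; exact: bigmin_le.
Qed.

End PositiveVectors.

Section OrderPreservingHomogeneous.
Variables (R : realType) (n : nat) (f : ('I_n -> R) -> ('I_n -> R)).
Hypotheses (fpos : maps_pos f) (fmono : order_preserving f) (fhom : homogeneous f).
Local Notation vec := ('I_n -> R).

Lemma ext0_le (z y : vec) i :
  (forall k, 0 <= z k) -> (forall k, z k < y k) -> ext0 f z i <= f y i.
Proof.
move=> z_ge0 zy; apply: ge_inf; last by exists y.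
exists 0 => _ [y' zy' <-]; apply/ltW/fpos => k; exact: le_lt_trans (z_ge0 k) (zy' k).
Qed.

Lemma ext0_ge (z : vec) i c :
  (forall y, (forall k, z k < y k) -> c <= f y i) -> c <= ext0 f z i.
Proof.
move=> c_le; apply: lb_le_inf; last by move=> _ [y zy <-]; exact: c_le.
by eexists; exists (fun k => z k + 1) => // k; rewrite ltrDl.
Qed.

Lemma extoo_ge z (y : vec) i :
  posv y -> (forall k, ((y k)%:E < z k)%E) -> ((f y i)%:E <= extoo f z i)%E.
Proof. by move=> ypos yz; apply: ereal_sup_ubound; exists y. Qed.

Lemma extoo_le z i C :
  (forall y, posv y -> (forall k, ((y k)%:E < z k)%E) -> f y i <= C) ->
  (extoo f z i <= C%:E)%E.
Proof. by move=> le_C; apply: ge_ereal_sup => _ [y [ypos yz] <-]; rewrite lee_fin le_C. Qed.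

Lemma f_lbound_of_expv (I : {set 'I_n}) a c (y : vec) m :
  (forall t, c <= f (expv (- t) I) a) -> posv y -> 0 < m ->
  (forall k, k \notin I -> m <= y k) -> c * m <= f y a.
Proof.
move=> c_le ypos m0 m_le; set d := \big[Num.min/m]_k y k.
have d0 : 0 < d by apply/bigmin_gtP.
pose t := ln (m / d).
have scaled_le k : m * expv (- t) I k <= y k.
  rewrite expvE; case: ifP => kI; last by rewrite mulr1 m_le ?kI.
  rewrite expRN lnK ?posrE ?divr_gt0 // invf_div mulrC divfK ?gt_eqF //.
  exact: bigmin_le.
apply: le_trans (fmono (fun k => mulr_gt0 m0 (expv_pos _ _ k)) ypos scaled_le a).
rewrite fhom //; last exact: expv_pos.
by rewrite /= [c * m]mulrC ler_pM2l.
Qed.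

Lemma f_ubound_of_expv (I : {set 'I_n}) b C (y : vec) m :
  (forall t, f (expv t I) b <= C) -> posv y -> 0 < m ->
  (forall k, k \notin I -> y k <= m) -> f y b <= C * m.
Proof.
move=> le_C ypos m0 le_m; set D := \big[Num.max/m]_k y k.
have D0 : 0 < D by apply: lt_le_trans m0 (bigmax_ge_id _ _ _ _).
pose t := ln (D / m).
have scaled_ge k : y k <= m * expv t I k.
  rewrite expvE; case: ifP => kI; last by rewrite mulr1 le_m ?kI.
  rewrite lnK ?posrE ?divr_gt0 // mulrC divfK ?gt_eqF //.
  exact: le_bigmax.
apply: le_trans (fmono ypos (fun k => mulr_gt0 m0 (expv_pos _ _ k)) scaled_ge b) _.
rewrite fhom //; last exact: expv_pos.
by rewrite /= [C * m]mulrC ler_pM2l.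
Qed.

Lemma H0_invariant_lbound (A : {set 'I_n}) : hg_invariant (H0 f) (~: A) ->
  exists2 c, 0 < c & forall a t, a \in A -> c <= f (expv (- t) (~: A)) a.
Proof.
move=> Ainv.
have c_ a : exists2 c, 0 < c & a \in A -> forall t, c <= f (expv (- t) (~: A)) a.
  have [aA|] := boolP (a \in A); last by exists 1.
  have aNA : a \notin ~: A by rewrite inE negbK.
  have [s t st|t|noarc|c c0 c_le] :=
    nonincreasing_pos_lbound (g := fun t => f (expv (- t) (~: A)) a); last by exists c.
  - by apply: (fmono (expv_pos _ _) (expv_pos _ _)) => k; apply: expv_le; rewrite lerN2.
  - exact/ltW/(fpos (expv_pos _ _)).
  - by have := Ainv _ a (conj aNA noarc) (subxx _); rewrite (negbTE aNA).
have [c c0 c_le] := fin_all_exists2 c_.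
exists (\big[Num.min/1]_a c a); first exact/bigmin_gtP.
by move=> a t aA; apply: le_trans (c_le a aA t); exact: bigmin_le.
Qed.

Lemma Hoo_invariant_ubound (B : {set 'I_n}) : hg_invariant (Hoo f) (~: B) ->
  exists C, forall b t, b \in B -> f (expv t (~: B)) b <= C.
Proof.
move=> Binv.
have C_ b : exists C, b \in B -> forall t, f (expv t (~: B)) b <= C.
  have [bB|] := boolP (b \in B); last by exists 0.
  have bNB : b \notin ~: B by rewrite inE negbK.
  have [s t st|noarc|C le_C] :=
    nondecreasing_ubound (g := fun t => f (expv t (~: B)) b); last by exists C.
  - by apply: (fmono (expv_pos _ _) (expv_pos _ _)) => k; exact: expv_le.
  - by have := Binv _ b (conj bNB noarc) (subxx _); rewrite (negbTE bNB).
have [C le_C] := fin_all_exists C_.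
exists (\big[Num.max/0]_b C b) => b t bB; exact: le_trans (le_C b bB t) (le_bigmax _ _ b).
Qed.

Lemma P0_ge0 (J : {set 'I_n}) (x : vec) k : posv x -> 0 <= P0 J x k.
Proof. by move=> xpos; rewrite /P0; case: ifP => // _; exact/ltW. Qed.

Lemma fJ0_out (J : {set 'I_n}) (x : vec) i : i \notin J -> fJ0 J f x i = 0.
Proof. by rewrite /fJ0 /P0 => /negbTE ->. Qed.

Lemma fJ0_le (J : {set 'I_n}) (x : vec) i : posv x -> i \in J -> fJ0 J f x i <= 2 * f x i.
Proof.
move=> xpos iJ; rewrite /fJ0 {1}/P0 iJ.
have -> : 2 * f x i = f (fun k => 2 * x k) i by rewrite fhom.
apply: ext0_le => k; first exact: P0_ge0.
by rewrite /P0; have := xpos k; case: ifP => _ => ?; lra.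
Qed.

Lemma fJ0_lbound (J A : {set 'I_n}) a c (x : vec) :
  A \subset J -> a \in A -> (forall t, c <= f (expv (- t) (~: A)) a) ->
  posv x -> (forall k, k \in A -> x a <= x k) -> c * x a <= fJ0 J f x a.
Proof.
move=> AJ aA c_le xpos xa_min; rewrite /fJ0 {1}/P0 (subsetP AJ _ aA).
apply: ext0_ge => y Py; apply: f_lbound_of_expv c_le _ (xpos a) _.
  by move=> k; apply: le_lt_trans (P0_ge0 _ _ xpos) (Py k).
move=> k; rewrite inE negbK => kA; apply: le_trans (xa_min k kA) (ltW _).
by have := Py k; rewrite /P0 (subsetP AJ _ kA).
Qed.

Lemma fJoo_out (K : {set 'I_n}) (x : vec) i : i \notin K -> fJoo K f x i = +oo%E.
Proof. by rewrite /fJoo /Poo => /negbTE ->. Qed.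

Lemma fJoo_ge (K : {set 'I_n}) (x : vec) i :
  posv x -> i \in K -> ((2^-1 * f x i)%:E <= fJoo K f x i)%E.
Proof.
move=> xpos iK; rewrite /fJoo {1}/Poo iK.
have -> : 2^-1 * f x i = f (fun k => 2^-1 * x k) i by rewrite fhom.
apply: extoo_ge => k; first by have := xpos k; lra.
by rewrite /Poo; case: ifP => _; [rewrite lte_fin; have := xpos k; lra | exact: ltry].
Qed.

Lemma fJoo_ubound (K B : {set 'I_n}) b C (x : vec) :
  B \subset K -> b \in B -> (forall t, f (expv t (~: B)) b <= C) ->
  posv x -> (forall k, k \in B -> x k <= x b) -> (fJoo K f x b <= (C * x b)%:E)%E.
Proof.
move=> BK bB le_C xpos xb_max; rewrite /fJoo {1}/Poo (subsetP BK _ bB).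
apply: extoo_le => y ypos yPx; apply: f_ubound_of_expv le_C ypos (xpos b) _.
move=> k; rewrite inE negbK => kB; apply: le_trans (xb_max k kB); apply/ltW.
by have := yPx k; rewrite /Poo (subsetP BK _ kB) lte_fin.
Qed.

Definition small_off (eps : R) (K : {set 'I_n}) := exists x : vec,
  [/\ posv x, forall k, x k <= 1 & forall i, i \notin K -> f x i <= eps * x i].

Definition large_off (M : R) (K : {set 'I_n}) := exists x : vec,
  [/\ posv x, forall k, 1 <= x k & forall i, i \notin K -> M * x i <= f x i].

Lemma small_off_step (eps : R) (K I : {set 'I_n}) j : 0 < eps ->
  H0 f I j -> I \subset K -> j \notin K -> small_off eps (j |: K) -> small_off eps K.
Proof.
move=> eps0 [_ cvg0] IK jK [x' [x'pos x'_le1 x'small]].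
have [t [t0 ft]] := near_pinfty_ge0 (cvgr0_norm_le _ cvg0 _ (mulr_gt0 eps0 (x'pos j))).
pose d := expR (- t); have d0 : 0 < d := expR_gt0 _.
have d_le1 : d <= 1 by rewrite expR_le1 oppr_le0.
pose x k := if k \in K then d * x' k else x' k.
have x_out k : k \notin K -> x k = x' k by rewrite /x => /negbTE ->.
have x_le k : x k <= x' k by rewrite /x; case: ifP => // _; rewrite ler_piMl // ltW.
have xpos : posv x by move=> k; rewrite /x; case: ifP => _; rewrite ?mulr_gt0.
exists x; split=> // [k|i iK]; first exact: le_trans (x_le k) (x'_le1 k).
rewrite x_out //; have [->|ij] := eqVneq i j.
  apply: le_trans (le_trans (ler_norm _) ft); apply: (fmono xpos (expv_pos _ _)) => k.
  have [d_ge0 x'_ge0] := (ltW d0, ltW (x'pos k)).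
  rewrite expvE; case: ifP => [kI|_]; first by rewrite /x (subsetP IK _ kI) ler_piMr.
  by rewrite /x; case: ifP => _; rewrite ?mulr_ile1.
apply: le_trans (fmono xpos x'pos x_le i) (x'small i _).
by rewrite !inE negb_or ij.
Qed.

Lemma large_off_step (M : R) (K I : {set 'I_n}) j :
  Hoo f I j -> I \subset K -> j \notin K -> large_off M (j |: K) -> large_off M K.
Proof.
move=> [_ cvgy] IK jK [x' [x'pos x'_ge1 x'large]].
have [t [t0 ft]] := near_pinfty_ge0 ((cvgryPge _).1 cvgy (M * x' j)).
pose d := expR t; have d_ge1 : 1 <= d by rewrite -expR0 ler_expR.
pose x k := if k \in K then d * x' k else x' k.
have x_out k : k \notin K -> x k = x' k by rewrite /x => /negbTE ->.
have x_ge k : x' k <= x k by rewrite /x; case: ifP => // _; rewrite ler_peMl // ltW.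
have xpos : posv x by move=> k; apply: lt_le_trans (x'pos k) (x_ge k).
exists x; split=> // [k|i iK]; first exact: le_trans (x'_ge1 k) (x_ge k).
rewrite x_out //; have [->|ij] := eqVneq i j.
  apply: le_trans ft _; apply: (fmono (expv_pos _ _) xpos) => k.
  rewrite expvE; case: ifP => [kI|_]; last exact: le_trans (x'_ge1 k) (x_ge k).
  by rewrite /x (subsetP IK _ kI) ler_peMr // (le_trans ler01 d_ge1).
apply: le_trans (x'large i _) (fmono x'pos xpos x_ge i).
by rewrite !inE negb_or ij.
Qed.

Lemma reachT_small_off (eps : R) (K : {set 'I_n}) :
  0 < eps -> reach K (H0 f) = [set: 'I_n] -> small_off eps K.
Proof.
move=> eps0; apply: reachT_ind => [|K' I j EIj IK' jK'].
  by exists (fun=> 1); split=> [|k|i]; rewrite ?inE //; exact: posv1.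
exact: small_off_step eps0 EIj IK' jK'.
Qed.

Lemma reachT_large_off (M : R) (K : {set 'I_n}) :
  reach K (Hoo f) = [set: 'I_n] -> large_off M K.
Proof.
apply: reachT_ind => [|K' I j EIj IK' jK'].
  by exists (fun=> 1); split=> [|k|i]; rewrite ?inE //; exact: posv1.
exact: large_off_step EIj IK' jK'.
Qed.

End OrderPreservingHomogeneous.

Theorem lemma3p9 (R : realType) (n : nat) (f : ('I_n -> R) -> ('I_n -> R))
    (J : {set 'I_n}) :
  maps_pos f -> order_preserving f -> homogeneous f ->
  [<-> ~ (exists A : {set 'I_n}, [/\ A != finset.set0, A \subset J & hg_invariant (H0 f) (~: A)]);
       reach (~: J) (H0 f) = [set: 'I_n];
       spec_r (fJ0 J f) = 0]
  /\
  [<-> ~ (exists B : {set 'I_n}, [/\ B != finset.set0, B \subset ~: J & hg_invariant (Hoo f) (~: B)]);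
       reach J (Hoo f) = [set: 'I_n];
       spec_lambda (fJoo (~: J) f) = +oo%E].
Proof.
move=> fpos fmono fhom; split; tfae.
- by move=> noA; apply/reachTP; rewrite setCK.
- move=> reachT; apply: spec_r_eq0 => eps eps0.
  have [x [xpos _ xsmall]] := reachT_small_off fmono (divr_gt0 eps0 (ltr0n _ 2)) reachT.
  exists x => // i; have [iJ|iNJ] := boolP (i \in J); last by rewrite fJ0_out // mulr_ge0 ?ltW.
  apply: le_trans (fJ0_le fpos fhom xpos iJ) _.
  by have := xsmall i; rewrite inE iJ => /(_ isT); have := xpos i; nra.
- move=> r0 [A [A0 AJ Ainv]]; have [c c0 c_le] := H0_invariant_lbound fpos fmono Ainv.
  suff : c <= spec_r (fJ0 J f) by rewrite r0 leNgt c0.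
  apply: spec_r_ge => x xpos; have /set0Pn [a0 a0A] := A0.
  have [a aA a_min] := arg_minP x a0A; exists a.
  by rewrite ler_pdivlMr // (fJ0_lbound fmono fhom AJ aA (c_le a ^~ aA)).
- by move=> noB; apply/reachTP.
- move=> reachT; apply: spec_lambda_eqy => M M0.
  have [x [xpos _ xlarge]] := reachT_large_off fmono (2 * M) reachT.
  exists x => // i; have [iJ|iNJ] := boolP (i \in J).
    by rewrite fJoo_out ?inE ?iJ // mulyr gtr0_sg ?mul1e ?leey // invr_gt0.
  have x_ge0 : (0 <= ((x i)^-1)%:E)%E by rewrite lee_fin invr_ge0 ltW.
  apply: le_trans (lee_wpmul2r x_ge0 (fJoo_ge fhom xpos _)); last by rewrite inE.
  by rewrite -EFinM lee_fin ler_pdivlMr //; have := xlarge i iNJ; have := xpos i; nra.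
- move=> lam_oo [B [B0 BJ Binv]]; have [C le_C] := Hoo_invariant_ubound fmono Binv.
  suff : (spec_lambda (fJoo (~: J) f) <= C%:E)%E by rewrite lam_oo.
  apply: spec_lambda_le => x xpos; have /set0Pn [b0 b0B] := B0.
  have [b bB b_max] := arg_maxP x b0B; exists b.
  have x_ge0 : (0 <= ((x b)^-1)%:E)%E by rewrite lee_fin invr_ge0 ltW.
  apply: le_trans (lee_wpmul2r x_ge0 (fJoo_ubound fmono fhom BJ bB (le_C b ^~ bB) xpos b_max)) _.
  by rewrite -EFinM mulfK ?gt_eqF.
Qed.
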